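(* Let $\mathbb{X}$ be an infinite-dimensional (real or complex) Banach space and let $\mathcal{B}=(\mathbf{e}_n)_{n=1}^\infty$ be a semi-normalized basis of $\mathbb{X}$ with $C_w=1$, i.e. $\|\mathcal{G}_N(x)\|\le\|x\|$ for every $x\in\mathbb{X}$, every $N\in\mathbb{N}$ and every choice of greedy set $\Lambda_N(x)$. Then $C_t=1$, i.e. $\|x-\mathcal{G}_N(x)\|\le\|x\|$ for all such $x$, $N$, $\Lambda_N(x)$; in particular $\mathcal{B}$ is $1$-quasi-greedy.
   Context: A basis $(\mathbf{e}_n)_{n=1}^\infty$ is a Schauder basis; semi-normalized means $0<\inf_n\|\mathbf{e}_n\|\le\sup_n\|\mathbf{e}_n\|<\infty$. Let $(\mathbf{e}_n^* )$ be the biorthogonal functionals. For $x\in\mathbb{X}$ and $N\in\mathbb{N}$, a greedy set $\Lambda_N(x)$ is any set of $N$ indices with $\min\{|\mathbf{e}_j^*(x)|: j\in\Lambda_N(x)\}\ge\max\{|\mathbf{e}_j^*(x)|: j\notin\Lambda_N(x)\}$, and $\mathcal{G}_N(x)=\sum_{j\in\Lambda_N(x)}\mathbf{e}_j^*(x)\mathbf{e}_j$. $C_w$ is the smallest constant $C$ with $\|\mathcal{G}_N(x)\|\le C\|x\|$ for all $x,N$ and choices of greedy sets; $C_t$ is the smallest $\tilde C$ with $\|x-\mathcal{G}_N(x)\|\le\tilde C\|x\|$ for all $x,N$ and choices of greedy sets. The quasi-greedy constant is $C_{qg}=\max\{C_w,C_t\}$, and the basis is $1$-quasi-greedy if $C_{qg}\le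 1$. *)

From HB Require Import structures.
From mathcomp Require Import all_boot all_order all_algebra.
From mathcomp Require Import all_classical all_reals all_analysis.
From mathcomp.real_closed Require Import complex.
Set Implicit Arguments. Unset Strict Implicit. Unset Printing Implicit Defensive.
Import Order.TTheory GRing.Theory Num.Theory.
Import numFieldNormedType.Exports.
Local Open Scope ring_scope.
Local Open Scope classical_set_scope.

Section Greedy.
Variables (K : numFieldType) (V : normedModType K).

Definition schauder_basis (e : nat -> V) : Prop :=
  forall x : V, exists! a : nat -> K,
    (fun N => \sum_(n < N) a n *: e n) @ \oo --> x.

Definition coefficient_functionals (e : nat -> V) (estar : nat -> V -> K) : Prop :=
  forall x : V, (fun N => \sum_(n < N) estar n x *: e n) @ \oo --> x.

Definition semi_normalized (e : nat -> V) : Prop :=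
  exists c C : K, 0 < c /\ forall n, c <= `|e n| <= C.

Definition greedy_set (estar : nat -> V -> K) (x : V) (A : seq nat) : Prop :=
  uniq A /\ forall j k, j \in A -> k \notin A -> `|estar k x| <= `|estar j x|.

Definition greedy_sum (e : nat -> V) (estar : nat -> V -> K) (x : V)
  (A : seq nat) : V := \sum_(j <- A) estar j x *: e j.

Definition Cw_le1 e estar : Prop :=
  forall x A, greedy_set estar x A -> `|greedy_sum e estar x A| <= `|x|.

Definition Ct_le1 e estar : Prop :=
  forall x A, greedy_set estar x A -> `|x - greedy_sum e estar x A| <= `|x|.

Definition one_quasi_greedy e estar : Prop := Cw_le1 e estar /\ Ct_le1 e estar.

Definition corollary_claim : Prop :=
  forall (e : nat -> V) (estar : nat -> V -> K),
    schauder_basis e -> coefficient_functionals e estar -> semi_normalized e ->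
    Cw_le1 e estar -> Ct_le1 e estar /\ one_quasi_greedy e estar.
End Greedy.

From HB Require Import structures.
From mathcomp Require Import all_boot all_order all_algebra.
From mathcomp Require Import all_classical all_reals all_analysis.
From mathcomp.real_closed Require Import complex.
Unset Printing Implicit Defensive.
Import Order.TTheory GRing.Theory Num.Theory.
Import numFieldNormedType.Exports.
Local Open Scope ring_scope.
Local Open Scope classical_set_scope.

(** If [C_w = 1], then every coordinate projection [P_S] onto a finite set [S]
    has norm at most one, not only the greedy ones: discarding the indices of
    [S] where [x] vanishes, the vector [y = r x + (1 - r) P_S x] has the same
    coefficients as [x] on [S] and coefficients shrunk by the factor [r]
    outside [S], so for [r > 0] small enough [S] is a greedy set of [y] with
    [G(y) = P_S x].  Then [|P_S x| <= r |x| + (1 - r) |P_S x|], i.e.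
    [|P_S x| <= |x|].  Finally [x - G_N(x)] is the limit of the coordinate
    projections of [x] onto [{0, ..., n-1} \ Lambda_N(x)] as [n] grows. *)

Lemma big_ord_mem {M : nmodType} (F : nat -> M) {S : seq nat} {N : nat} :
  uniq S -> (forall j, j \in S -> (j < N)%N) ->
  \sum_(n < N | (n : nat) \in S) F n = \sum_(j <- S) F j.
Proof.
move=> uS ltSN; rewrite -(big_mkord (fun n => n \in S)) -big_filter.
apply/perm_big/uniq_perm => //; first exact/filter_uniq/iota_uniq.
move=> j; rewrite mem_filter mem_iota /= add0n subn0.
by case: (boolP (j \in S)) => //= /ltSN ->.
Qed.

Lemma exists_lower_bound_pos (K : numFieldType) (T : eqType) (f : T -> K)
    (s : seq T) :
  (forall j, j \in s -> 0 < f j) -> exists2 m, 0 < m & forall j, j \in s -> m <= f j.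
Proof.
elim: s => [|i s IHs] fs_gt0; first by exists 1.
have fi_gt0 : 0 < f i by apply: fs_gt0; rewrite mem_head.
have [m m_gt0 m_le] : exists2 m, 0 < m & forall j, j \in s -> m <= f j.
  by apply: IHs => j js; apply: fs_gt0; rewrite in_cons js orbT.
have sum_gt0 : 0 < m^-1 + (f i)^-1 by rewrite addr_gt0 ?invr_gt0.
exists (m^-1 + (f i)^-1)^-1; first by rewrite invr_gt0.
move=> j; rewrite in_cons => /predU1P[->|js].
  by rewrite -[leRHS]invrK lef_pV2 ?posrE ?invr_gt0 // lerDr invr_ge0 ltW.
apply: le_trans (m_le j js).
by rewrite -[leRHS]invrK lef_pV2 ?posrE ?invr_gt0 // lerDl invr_ge0 ltW.
Qed.

Section CoordinateProjections.
Variables (K : numFieldType) (V : normedModType K).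
Variables (e : nat -> V) (estar : nat -> V -> K).

Local Notation P := (greedy_sum e estar).

Lemma greedy_sum_filter_nz (x : V) (S : seq nat) :
  P x S = P x [seq j <- S | estar j x != 0].
Proof.
rewrite /greedy_sum big_filter [RHS]big_mkcond /=; apply: eq_bigr => j _.
by case: (eqVneq (estar j x) 0) => [->|]; rewrite ?scale0r.
Qed.

Lemma partial_sum_restrict (x : V) (S : seq nat) (N : nat) :
  uniq S -> (forall j, j \in S -> (j < N)%N) ->
  \sum_(n < N) (if (n : nat) \in S then estar n x else 0) *: e n = P x S.
Proof.
move=> uS ltSN; rewrite /greedy_sum -(big_ord_mem _ uS ltSN) [RHS]big_mkcond /=.
by apply: eq_bigr => n _; case: ifP; rewrite ?scale0r.
Qed.

Lemma partial_sum_subr_greedy_sum (x : V) (S : seq nat) (N : nat) :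
  uniq S -> (forall j, j \in S -> (j < N)%N) ->
  \sum_(n < N) estar n x *: e n - P x S = P x [seq n <- iota 0 N | n \notin S].
Proof.
move=> uS ltSN; rewrite /greedy_sum -(big_ord_mem _ uS ltSN) big_filter.
rewrite (bigID (fun n : 'I_N => (n : nat) \in S)) /= addrC addrK.
have -> : iota 0 N = index_iota 0 N by rewrite /index_iota subn0.
by rewrite big_mkord.
Qed.

Hypothesis basis_e : schauder_basis e.
Hypothesis coef_estar : coefficient_functionals e estar.

Lemma coef_unique (a : nat -> K) (z : V) :
  (fun N => \sum_(n < N) a n *: e n) @ \oo --> z -> forall n, estar n z = a n.
Proof.
move=> za n; have [a0 [_ uniq_a]] := basis_e z.
have a0_a := uniq_a _ za; have a0_estar := uniq_a (estar^~ z) (coef_estar z).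
by rewrite -a0_a a0_estar.
Qed.

Lemma coef_convex_comb_proj (x : V) (S : seq nat) (r : K) (n : nat) :
  uniq S ->
  estar n (r *: x + (1 - r) *: P x S) =
    r * estar n x + (1 - r) * (if n \in S then estar n x else 0).
Proof.
move=> uS; set b := fun n => if n \in S then estar n x else 0.
apply: (coef_unique (fun n => r * estar n x + (1 - r) * b n)).
have -> : (fun N => \sum_(n < N) (r * estar n x + (1 - r) * b n) *: e n) =
    (fun N => r *: \sum_(n < N) estar n x *: e n + (1 - r) *: \sum_(n < N) b n *: e n).
  apply: funext => N; rewrite !scaler_sumr -big_split /=.
  by apply: eq_bigr => k _; rewrite scalerDl !scalerA.
apply: cvgD; first exact: cvgZl_tmp (coef_estar x).
apply: cvgZl_tmp; apply: cvg_near_cst; exists (\max_(j <- S) j).+1 => // N /= ltSN.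
apply: partial_sum_restrict => // j jS.
by apply: leq_trans ltSN; rewrite ltnS (leq_bigmax_seq j jS).
Qed.

Hypothesis semi_normalized_e : semi_normalized e.

Lemma eventually_norm_coef_term_le2 (x : V) :
  exists N0, forall k, (N0 <= k)%N -> `|estar k x *: e k| <= 2.
Proof.
have /cvgrPdist_lt /(_ 1 ltr01) [N0 _ near_x] := coef_estar x.
exists N0 => k leN0k.
have sk_near : `|x - \sum_(n < k) estar n x *: e n| < 1 by exact: near_x.
have sk1_near : `|x - \sum_(n < k.+1) estar n x *: e n| < 1.
  by apply: near_x; exact: leqW.
rewrite big_ord_recr /= opprD addrA in sk1_near.
set r := x - \sum_(n < k) estar n x *: e n in sk_near sk1_near *.
have -> : estar k x *: e k = r - (r - estar k x *: e k) by rewrite opprB addrC subrK.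
apply: (le_trans (ler_normB _ _)); rewrite -[2]/(1 + 1 : K).
by apply: lerD; apply: ltW.
Qed.

Lemma coef_bounded (x : V) : exists2 M, 0 < M & forall k, `|estar k x| <= M.
Proof.
have [c [C [c_gt0 c_le]]] := semi_normalized_e.
have [N0 term_le2] := eventually_norm_coef_term_le2 x.
have head_ge0 : 0 <= \sum_(k < N0) `|estar k x| by apply: sumr_ge0.
exists (2 / c + \sum_(k < N0) `|estar k x|).
  by rewrite ltr_wpDr // divr_gt0.
move=> k; case: (ltnP k N0) => [ltkN0|leN0k].
  rewrite (bigD1 (Ordinal ltkN0)) //= addrCA lerDl.
  by apply: addr_ge0; [rewrite divr_ge0 ?ltW | exact: sumr_ge0].
rewrite ler_wpDr // ler_pdivlMr //.
apply: le_trans (term_le2 k leN0k).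
by rewrite normrZ ler_wpM2l //; have /andP[] := c_le k.
Qed.

Hypothesis Cw_e : Cw_le1 e estar.

Lemma norm_greedy_sum_le (x : V) (S : seq nat) : uniq S -> `|P x S| <= `|x|.
Proof.
move=> uS; rewrite greedy_sum_filter_nz.
set S' := [seq j <- S | estar j x != 0]; have uS' : uniq S' by exact: filter_uniq.
have [m m_gt0 m_le] : exists2 m, 0 < m & forall j, j \in S' -> m <= `|estar j x|.
  by apply: exists_lower_bound_pos => j; rewrite mem_filter normr_gt0 => /andP[].
have [M M_gt0 M_ge] := coef_bounded x.
set r := m / (m + M).
have mM_gt0 : 0 < m + M by rewrite addr_gt0.
have r_gt0 : 0 < r by rewrite divr_gt0.
have one_sub_r_ge0 : 0 <= 1 - r by rewrite subr_ge0 ler_pdivrMr // mul1r lerDl ltW.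
have rM_le : r * M <= m by rewrite mulrAC ler_pdivrMr // ler_pM2l // lerDr ltW.
clearbody r.
set y := r *: x + (1 - r) *: P x S'.
have coef_y j : j \in S' -> estar j y = estar j x.
  by move=> jS'; rewrite /y coef_convex_comb_proj // jS' -mulrDl addrC subrK mul1r.
have greedy_S' : greedy_set estar y S'.
  split=> // j k jS' kS'; rewrite (coef_y j jS') /y coef_convex_comb_proj //.
  rewrite (negbTE kS') mulr0 addr0 normrM (ger0_norm (ltW r_gt0)); apply: le_trans (m_le j jS').
  by apply: le_trans rM_le; rewrite ler_wpM2l // ltW.
have greedy_y : P y S' = P x S'.
  by rewrite /greedy_sum !big_seq; apply: eq_bigr => j jS'; rewrite coef_y.
have Px_le_y : `|P x S'| <= `|y| by rewrite -greedy_y; exact: Cw_e.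
have y_le : `|y| <= r * `|x| + (1 - r) * `|P x S'|.
  by apply: (le_trans (ler_normD _ _)); rewrite !normrZ !ger0_norm // ltW.
rewrite -(ler_pM2l r_gt0) -(lerD2r ((1 - r) * `|P x S'|)).
by rewrite -[X in X <= _]mulrDl addrC subrK mul1r (le_trans Px_le_y).
Qed.

Lemma norm_subr_greedy_sum_le (x : V) (A : seq nat) :
  uniq A -> `|x - P x A| <= `|x|.
Proof.
move=> uA; apply/ler_addgt0Pr => eps eps_gt0.
have /cvgrPdist_lt /(_ eps eps_gt0) [N0 _ near_x] := coef_estar x.
set N := maxn N0 (\max_(j <- A) j).+1.
have ltAN j : j \in A -> (j < N)%N.
  by move=> jA; rewrite leq_max ltnS (leq_bigmax_seq j jA) // orbT.
have sN_near : `|x - \sum_(n < N) estar n x *: e n| < eps.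
  by apply: near_x; rewrite /= leq_maxl.
rewrite -[X in X - P x A](subrK (\sum_(n < N) estar n x *: e n)) -addrA.
rewrite partial_sum_subr_greedy_sum // addrC.
apply: (le_trans (ler_normD _ _)); apply: lerD; last exact: ltW.
exact/norm_greedy_sum_le/filter_uniq/iota_uniq.
Qed.

End CoordinateProjections.

Lemma corollary_claim_normedMod (K : numFieldType) (V : normedModType K) :
  corollary_claim V.
Proof.
move=> e estar basis_e coef_estar semi_normalized_e Cw_e.
have Ct_e : Ct_le1 e estar.
  by move=> x A [uA _]; exact: norm_subr_greedy_sum_le.
by split; [|split].
Qed.

Theorem corollary2p2 (R : realType) :
  (forall V : completeNormedModType R, corollary_claim V) /\
  (forall V : completeNormedModType R[i], corollary_claim V).
Proof. by split=> V; apply: corollary_claim_normedMod. Qed.
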